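(* Let $\mathcal L$ be a self-adjoint operator on a Hilbert space $\mathcal H$ with an orthonormal basis of eigenfunctions $\mathcal Lf_k=\lambda_kf_k$, and assume that for some $0<\delta<\lambda$, $$\delta\ge\lambda_1,\dots,\lambda_{N+1}\ge-\delta>-\lambda\ge\lambda_{N+2}\ge\lambda_{N+3}\ge\dots .$$ For $u\in\mathcal H$ with $\langle f_{N+1},u\rangle\ne0$ define $u^\perp=\{f\in\mathcal H:\langle f,u\rangle=0\}$ and $$F_u=\frac{1}{\langle f_{N+1},u\rangle}\sum_{i=1}^N\langle f_i,u\rangle f_i+f_{N+1}.$$ Then (i) there exists an $N$-dimensional subspace $\mathcal U\subset u^\perp$ such that $|\langle\mathcal Lh,h\rangle|\le\delta\|h\|^2$ for all $h\in\mathcal U$; and (ii) if $|\cos\angle(F_u,u)|\ge\sqrt{\delta/\lambda}$, where $\cos\angle(F_u,u)=\frac{\langle F_u,u\rangle}{\|F_u\|\|u\|}$, then for every nonzero $h$ with $h\perp u,f_1,\dots,f_{N+1}$, $$\frac{\langle\mathcal Lh,h\rangle}{\|h\|^2}\le\frac{\delta-\lambda\cos^2\angle(F_u,u)}{\cos^2\angle(F_u,u)+1}.$$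
   Context: $N\ge1$ is an integer; the eigenvalues $\lambda_k$ are listed with the stated ordering; $\angle(F_u,u)$ denotes the angle between $F_u$ and $u$. *)

From HB Require Import structures.
From mathcomp Require Import all_boot all_order all_algebra.
From mathcomp Require Import reals.
Set Implicit Arguments. Unset Strict Implicit. Unset Printing Implicit Defensive.
Import Order.TTheory GRing.Theory Num.Theory.
Local Open Scope ring_scope.

Section Hilbert.
Variables (R : realType) (V : lmodType R) (inner : V -> V -> R).

Definition is_inner_product : Prop :=
  [/\ forall x y, inner x y = inner y x,
      forall a x y z, inner (a *: x + y) z = a * inner x z + inner y z,
      forall x, 0 <= inner x x
    & forall x, inner x x = 0 -> x = 0].

Definition inorm (x : V) : R := Num.sqrt (inner x x).

Definition complete_inner : Prop :=
  forall s : nat -> V,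
    (forall e : R, 0 < e -> exists M : nat, forall m n : nat,
        (M <= m)%N -> (M <= n)%N -> inorm (s m - s n) < e) ->
    exists x : V, forall e : R, 0 < e -> exists M : nat, forall n : nat,
        (M <= n)%N -> inorm (s n - x) < e.

(* f 0, f 1, f 2, ... is an orthonormal basis (paper: f_1, f_2, f_3, ...):
   orthonormal and every x is the norm-limit of its Fourier partial sums *)
Definition orthonormal_basis (f : nat -> V) : Prop :=
  (forall i j : nat, inner (f i) (f j) = if i == j then 1 else 0) /\
  (forall x : V, forall e : R, 0 < e -> exists M : nat, forall n : nat,
      (M <= n)%N -> inorm (x - \sum_(k < n) inner x (f k) *: f k) < e).

Definition dense_set (D : V -> Prop) : Prop :=
  forall x : V, forall e : R, 0 < e -> exists d, D d /\ inorm (x - d) < e.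

(* (possibly unbounded) self-adjoint operator L with domain D:
   D is a dense linear subspace, L is linear on D, L is symmetric on D,
   and the domain of the adjoint is contained in D (so L = L^* ). *)
Definition self_adjoint (D : V -> Prop) (L : V -> V) : Prop :=
  [/\ forall a x y, D x -> D y -> D (a *: x + y) /\ L (a *: x + y) = a *: L x + L y,
      dense_set D,
      forall x y, D x -> D y -> inner (L x) y = inner x (L y)
    & forall y z, (forall x, D x -> inner (L x) y = inner x z) -> D y].

Definition cos_angle (x y : V) : R := inner x y / (inorm x * inorm y).

(* F_u (paper indices: f_1..f_N are f 0 .. f (N-1); f_{N+1} is f N) *)
Definition F_u (f : nat -> V) (N : nat) (u : V) : V :=
  (inner (f N) u)^-1 *: (\sum_(i < N) inner (f i) u *: f i) + f N.

End Hilbert.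

From HB Require Import structures.
From mathcomp Require Import all_boot all_order all_algebra.
From mathcomp Require Import reals.
From mathcomp Require Import lra.
Import Order.TTheory GRing.Theory Num.Theory.
Set Implicit Arguments. Unset Strict Implicit.
Local Open Scope ring_scope.

(* (i) The vectors f_i - (<f_i,u>/<f_(N+1),u>) f_(N+1), i <= N, are linearly
   independent, orthogonal to u, and span a subspace of span(f_1..f_(N+1)),
   where every eigenvalue has modulus at most delta; on a finite combination
   of eigenvectors <Lh,h> = sum lam_k e_k^2, whence |<Lh,h>| <= delta |h|^2.
   (ii) A vector h orthogonal to f_1..f_(N+1) only has Fourier coefficients on
   eigenvalues <= -Lam, so <Lh,h> <= -Lam |h|^2: the functional <Lh + Lam h, .>
   is <= 0 on the Fourier partial sums of h, hence on their limit h. *)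

Section InnerProduct.
Variables (R : realType) (V : lmodType R) (inner : V -> V -> R).
Hypothesis inner_ip : is_inner_product inner.

Lemma inner_sym x y : inner x y = inner y x.
Proof. by case: inner_ip. Qed.

Lemma inner_ge0 x : 0 <= inner x x.
Proof. by case: inner_ip. Qed.

Lemma inner_gt0 x : x != 0 -> 0 < inner x x.
Proof.
move=> x_neq0; rewrite lt_def inner_ge0 andbT.
by apply: contraNN x_neq0 => /eqP; case: inner_ip => _ _ _ /[apply] ->.
Qed.

Lemma inorm_sqr x : inorm inner x ^+ 2 = inner x x.
Proof. by rewrite sqr_sqrtr ?inner_ge0. Qed.

Lemma innerDZl a x y z : inner (a *: x + y) z = a * inner x z + inner y z.
Proof. by case: inner_ip. Qed.

Lemma innerDl x y z : inner (x + y) z = inner x z + inner y z.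
Proof. by have := innerDZl 1 x y z; rewrite scale1r mul1r. Qed.

Lemma inner0l z : inner 0 z = 0.
Proof. by have := innerDZl (-1) 0 0 z; rewrite scaler0 addr0 mulN1r addNr. Qed.

Lemma innerZl a x z : inner (a *: x) z = a * inner x z.
Proof. by have := innerDZl a x 0 z; rewrite !addr0 inner0l addr0. Qed.

Lemma innerBl x y z : inner (x - y) z = inner x z - inner y z.
Proof. by rewrite innerDl -scaleN1r innerZl mulN1r. Qed.

Lemma innerZr a x z : inner z (a *: x) = a * inner z x.
Proof. by rewrite !(inner_sym z) innerZl. Qed.

Lemma innerBr x y z : inner z (x - y) = inner z x - inner z y.
Proof. by rewrite !(inner_sym z) innerBl. Qed.

Lemma inner_suml n (F : 'I_n -> V) z :
  inner (\sum_(i < n) F i) z = \sum_(i < n) inner (F i) z.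
Proof.
exact: (big_morph (inner^~ z) (fun x y => innerDl x y z) (inner0l z)).
Qed.

Lemma inner_sumr n (F : 'I_n -> V) z :
  inner z (\sum_(i < n) F i) = \sum_(i < n) inner z (F i).
Proof. by rewrite inner_sym inner_suml; apply: eq_bigr => i _; apply: inner_sym. Qed.

Lemma inner_mul2_le t w d : 2 * t * inner w d <= t ^+ 2 * inner w w + inner d d.
Proof.
have := inner_ge0 (t *: w - d).
rewrite innerBl !innerBr !innerZl !innerZr (inner_sym d w); lra.
Qed.

(* Continuity of inner w, in the only form needed: nonpositivity passes to
   norm limits.  With t := <w,h> / (<w,w> + 1) and |h - s| < t, the estimate
   above gives 2 t <w,h> <= t^2 (<w,w> + 1) = t <w,h>. *)
Lemma inner_le0_of_approx w h :
  (forall e, 0 < e -> exists2 s, inorm inner (h - s) < e & inner w s <= 0) ->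
  inner w h <= 0.
Proof.
move=> approx; rewrite leNgt; apply/negP => wh_gt0.
have ww1_gt0 : 0 < inner w w + 1 by have := inner_ge0 w; lra.
set t := inner w h / (inner w w + 1).
have t_gt0 : 0 < t by rewrite divr_gt0.
have tE : t * (inner w w + 1) = inner w h by rewrite divfK ?gt_eqF.
have [s hs_lt ws_le0] := approx t t_gt0.
have dd_lt : inner (h - s) (h - s) < t ^+ 2.
  rewrite -inorm_sqr; have := sqrtr_ge0 (inner (h - s) (h - s)).
  by rewrite /inorm in hs_lt *; nra.
have wd_ge : inner w h <= inner w (h - s) by rewrite innerBr; lra.
have := inner_mul2_le t w (h - s).
have := ler_wpM2l (ltW t_gt0) wd_ge.
have := mulr_gt0 t_gt0 wh_gt0; nra.
Qed.

Variable f : nat -> V.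
Hypothesis f_orthonormal : forall i j, inner (f i) (f j) = if i == j then 1 else 0.

Lemma inner_basis_sum n (e : nat -> R) k : (k < n)%N ->
  inner (f k) (\sum_(j < n) e j *: f j) = e k.
Proof.
move=> lt_kn; rewrite inner_sumr.
transitivity (\sum_(j < n | j == k :> nat) e j); last by rewrite big_ord1_eq lt_kn.
rewrite [RHS]big_mkcond /=.
apply: eq_bigr => j _ /=; rewrite innerZr f_orthonormal eq_sym.
by case: eqP; rewrite ?mulr1 ?mulr0.
Qed.

Lemma inner_sum_basis n (x y : nat -> R) :
  inner (\sum_(k < n) x k *: f k) (\sum_(k < n) y k *: f k) = \sum_(k < n) x k * y k.
Proof. by rewrite inner_suml; apply: eq_bigr => k _; rewrite innerZl inner_basis_sum. Qed.

Section PerpVectors.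
Variables (N : nat) (u : V).
Hypothesis fN_u_neq0 : inner (f N) u != 0.

Definition perp_vec (i : 'I_N) : V := f i - (inner (f i) u / inner (f N) u) *: f N.

Lemma perp_vec_orth i : inner (perp_vec i) u = 0.
Proof. by rewrite innerBl innerZl divfK ?subrr. Qed.

Lemma perp_vec_free (c : 'I_N -> R) :
  \sum_(i < N) c i *: perp_vec i = 0 -> forall i, c i = 0.
Proof.
move=> sum0 j; have := congr1 (inner^~ (f j)) sum0.
have fNj : inner (f N) (f j) = 0 by rewrite f_orthonormal gtn_eqF.
rewrite /= inner0l inner_suml (bigD1 j) //= big1 => [|i ij].
  by rewrite innerZl innerBl innerZl fNj f_orthonormal eqxx mulr0 subr0 mulr1 addr0.
rewrite innerZl innerBl innerZl fNj f_orthonormal val_eqE (negbTE ij).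
by rewrite mulr0 subr0 mulr0.
Qed.

Lemma perp_vec_span (c : 'I_N -> R) : exists e : nat -> R,
  \sum_(i < N) c i *: perp_vec i = \sum_(k < N.+1) e k *: f k.
Proof.
pose m := - \sum_(i < N) c i * (inner (f i) u / inner (f N) u).
exists (fun k => if insub k is Some i then c i else m).
rewrite big_ord_recr /= insubF ?ltnn // /m scaleNr scaler_suml -sumrB.
by apply: eq_bigr => i _; rewrite valK scalerBr scalerA.
Qed.

End PerpVectors.

Section Operator.
Variables (D : V -> Prop) (L : V -> V) (lam : nat -> R).
Hypothesis L_linear :
  forall a x y, D x -> D y -> D (a *: x + y) /\ L (a *: x + y) = a *: L x + L y.
Hypothesis f_eigen : forall k, D (f k) /\ L (f k) = lam k *: f k.

Lemma L_sum_basis n (e : nat -> R) :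
  D (\sum_(k < n) e k *: f k) /\
  L (\sum_(k < n) e k *: f k) = \sum_(k < n) (e k * lam k) *: f k.
Proof.
elim: n => [|n [D_sum L_sum]].
  have [Df0 _] := f_eigen 0; have [D0 L0] := L_linear (-1) Df0 Df0.
  by rewrite !big_ord0; move: D0 L0; rewrite !scaleN1r !addNr.
have [Dfn Lfn] := f_eigen n; have [D_add L_add] := L_linear (e n) Dfn D_sum.
rewrite !big_ord_recr /= addrC [X in _ /\ _ = X]addrC.
by split=> //; rewrite L_add Lfn L_sum scalerA.
Qed.

Lemma rayleigh_sum_basis_le n (e : nat -> R) (delta : R) :
  (forall k, (k < n)%N -> `|lam k| <= delta) ->
  `|inner (L (\sum_(k < n) e k *: f k)) (\sum_(k < n) e k *: f k)|
    <= delta * inner (\sum_(k < n) e k *: f k) (\sum_(k < n) e k *: f k).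
Proof.
move=> lam_le; have [_ ->] := L_sum_basis n e.
rewrite (inner_sum_basis n (fun k => e k * lam k)) inner_sum_basis mulr_sumr.
apply: le_trans (ler_norm_sum _ _ _) _.
apply: ler_sum => k _; have := lam_le k (ltn_ord k).
rewrite mulrAC normrM -expr2 ger0_norm ?sqr_ge0 // mulrC.
by move=> /ler_wpM2r ->; rewrite ?sqr_ge0.
Qed.

Hypothesis L_sym : forall x y, D x -> D y -> inner (L x) y = inner x (L y).
Hypothesis f_expansion : forall x e, 0 < e -> exists M : nat, forall n : nat,
  (M <= n)%N -> inorm inner (x - \sum_(k < n) inner x (f k) *: f k) < e.

Lemma rayleigh_le_of_spectrum (mu : R) h : D h ->
  (forall k, inner h (f k) != 0 -> lam k <= mu) -> inner (L h) h <= mu * inner h h.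
Proof.
move=> Dh lam_le; set w := L h - mu *: h.
have w_fk k : inner w (f k) = (lam k - mu) * inner h (f k).
  have [Dfk Lfk] := f_eigen k.
  by rewrite innerBl L_sym // Lfk !innerZl innerZr inner_sym mulrBl.
suff : inner w h <= 0 by rewrite innerBl innerZl subr_le0.
apply: inner_le0_of_approx => e e_gt0; have [M expM] := f_expansion h e_gt0.
exists (\sum_(k < M) inner h (f k) *: f k); first exact: expM.
rewrite inner_sumr; apply: sumr_le0 => k _; rewrite innerZr w_fk mulrA.
have [->|/lam_le] := eqVneq (inner h (f k)) 0; first by rewrite mulr0.
by rewrite mulrAC -expr2 => le_mu; apply: mulr_ge0_le0; rewrite ?sqr_ge0 ?subr_le0.
Qed.

End Operator.
End InnerProduct.

Theorem theorem4p3 (R : realType) (V : lmodType R) (inner : V -> V -> R)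
  (D : V -> Prop) (L : V -> V) (f : nat -> V) (lam : nat -> R)
  (N : nat) (delta Lam : R) :
  is_inner_product inner ->
  complete_inner inner ->
  orthonormal_basis inner f ->
  self_adjoint inner D L ->
  (forall k : nat, D (f k) /\ L (f k) = lam k *: f k) ->
  0 < delta -> delta < Lam ->
  (forall k : nat, (k <= N)%N -> - delta <= lam k <= delta) ->
  lam N.+1 <= - Lam ->
  (forall k : nat, (N.+1 <= k)%N -> lam k.+1 <= lam k) ->
  forall u : V, inner (f N) u != 0 ->
  (* (i) an N-dimensional subspace U = span(b) of u^perp *)
  (exists b : 'I_N -> V,
      (forall c : 'I_N -> R, \sum_(i < N) c i *: b i = 0 -> forall i, c i = 0) /\
      (forall i, inner (b i) u = 0) /\
      (forall c : 'I_N -> R,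
         let h := \sum_(i < N) c i *: b i in
         D h /\ `|inner (L h) h| <= delta * inorm inner h ^+ 2)) /\
  (* (ii) *)
  (let c := cos_angle inner (F_u inner f N u) u in
   `|c| >= Num.sqrt (delta / Lam) ->
   forall h : V, h != 0 -> D h -> inner h u = 0 ->
     (forall i : nat, (i <= N)%N -> inner h (f i) = 0) ->
     inner (L h) h / inorm inner h ^+ 2 <= (delta - Lam * c ^+ 2) / (c ^+ 2 + 1)).
Proof.
move=> ip _ [f_on f_exp] [L_lin _ L_sym _] f_eig delta_gt0 delta_lt_Lam lam_small
  lam_N1 lam_noninc u fNu_neq0.
split.
  exists (perp_vec inner f u); split; first by move=> c /(perp_vec_free ip f_on).
  split=> [i|c h]; first exact: (perp_vec_orth ip fNu_neq0 i).
  rewrite /h inorm_sqr //; have [e ->] := perp_vec_span inner f u c.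
  split; first by have [] := L_sum_basis L_lin f_eig N.+1 e.
  apply: (rayleigh_sum_basis_le ip f_on L_lin f_eig) => k /lam_small.
  by rewrite ler_norml.
move=> c _ h h_neq0 Dh _ h_perp.
have lam_tail k : (N < k)%N -> lam k <= - Lam.
  move=> lt_Nk; apply: (le_trans _ lam_N1).
  elim: k lt_Nk => // k IH; rewrite ltnS leq_eqVlt => /predU1P[<- //|lt_Nk].
  exact: le_trans (lam_noninc _ lt_Nk) (IH lt_Nk).
have rayleigh : inner (L h) h <= - Lam * inner h h.
  apply: (rayleigh_le_of_spectrum ip f_eig L_sym f_exp (mu := - Lam) Dh) => k.
  by case: (leqP k N) => [/h_perp -> /eqP|/lam_tail].
have hh_gt0 := inner_gt0 ip h_neq0.
have c2_gt0 : 0 < c ^+ 2 + 1 by have := sqr_ge0 c; lra.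
rewrite inorm_sqr // ler_pdivrMr // (le_trans rayleigh) // ler_wpM2r ?(ltW hh_gt0) //.
by rewrite ler_pdivlMr //; lra.
Qed.
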